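(* For every positive integer $n$, $$\sum_{j=1}^{n-1}\csc^6\left(\frac{j\pi}{2n}\right) = \frac{8(n+1)(n-1)(8n^4+29n^2+71)}{945}.$$
   Context: Empty sums are equal to $0$. *)

From Stdlib Require Import Reals List.
Open Scope R_scope.

Definition csc (x : R) : R := / sin x.

(* sum_{j=m}^{m+k-1} f j ; empty sum is 0 *)
Definition sum_range (m k : nat) (f : nat -> R) : R :=
  fold_right Rplus 0 (map f (seq m k)).

From Stdlib Require Import Reals Lra Lia.
From mathcomp Require all_boot all_algebra Rstruct ring lra zify.
Open Scope R_scope.

(* Put t_j = j pi / (2n).  The addition formulas give polynomials C_n, S_n with
   C_n(sin^2 t) = cos (2nt), sin t cos t S_n(sin^2 t) = sin (2nt) and
   deg S_n <= n - 1.  For 0 < j < n, sin t_j and cos t_j are positive while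
   sin (2n t_j) = 0, so the n - 1 distinct numbers sin^2 t_j are all the roots
   of S_n and S_n = c prod_j (X - sin^2 t_j).  The sum of csc^6 t_j is the third
   power sum of the reciprocal roots, which Newton's identities express through
   the four lowest coefficients of S_n; these are polynomials in n, computed by
   induction from the recurrence defining (C_n, S_n). *)

Definition theta (n j : nat) : R := INR j * PI / (2 * INR n).

Lemma theta_lt_mono n j k : (0 < n)%nat -> (j < k)%nat -> theta n j < theta n k.
Proof.
intros hn hjk; unfold theta, Rdiv.
assert (0 < INR n) by (apply lt_0_INR; lia).
assert (INR j < INR k) by (apply lt_INR; lia).
apply Rmult_lt_compat_r; [apply Rinv_0_lt_compat; lra|].
apply Rmult_lt_compat_r; [apply PI_RGT_0 | lra].
Qed.

Lemma theta_bounds n j : (0 < j)%nat -> (j < n)%nat -> 0 < theta n j < PI / 2.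
Proof.
intros hj hjn.
assert (theta n 0 = 0) as h0 by (unfold theta; simpl; lra).
assert (theta n n = PI / 2) as hn by (unfold theta; field; apply not_0_INR; lia).
rewrite <- h0, <- hn; split; apply theta_lt_mono; lia.
Qed.

Lemma sin_theta_gt0 n j : (0 < j)%nat -> (j < n)%nat -> 0 < sin (theta n j).
Proof. intros hj hjn; destruct (theta_bounds n j hj hjn); apply sin_gt_0; lra. Qed.

Lemma cos_theta_gt0 n j : (0 < j)%nat -> (j < n)%nat -> 0 < cos (theta n j).
Proof. intros hj hjn; destruct (theta_bounds n j hj hjn); apply cos_gt_0; lra. Qed.

Lemma sin_2n_theta n j : (0 < n)%nat -> sin (2 * INR n * theta n j) = 0.
Proof.
intros hn; apply sin_eq_0_1; exists (Z.of_nat j).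
rewrite <- INR_IZR_INZ; unfold theta; field; apply not_0_INR; lia.
Qed.

Lemma sin_theta_lt_mono n j k : (0 < j)%nat -> (j < k)%nat -> (k < n)%nat ->
  sin (theta n j) < sin (theta n k).
Proof.
intros hj hjk hkn.
destruct (theta_bounds n j hj ltac:(lia)), (theta_bounds n k ltac:(lia) hkn).
apply sin_increasing_1; try lra; apply theta_lt_mono; lia.
Qed.

Lemma sin_theta_sqr_inj n j k : (0 < j)%nat -> (j < n)%nat -> (0 < k)%nat -> (k < n)%nat ->
  sin (theta n j) ^ 2 = sin (theta n k) ^ 2 -> j = k.
Proof.
intros hj hjn hk hkn e.
pose proof (sin_theta_gt0 n j hj hjn); pose proof (sin_theta_gt0 n k hk hkn).
destruct (Nat.lt_trichotomy j k) as [h | [h | h]]; [| exact h |].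
- pose proof (sin_theta_lt_mono n j k hj h hkn); nra.
- pose proof (sin_theta_lt_mono n k j hk h hjn); nra.
Qed.

Module SinePolynomials.
Import all_boot all_algebra Rstruct ring lra zify.
Import GRing.Theory Num.Theory.
Set Implicit Arguments.
Unset Strict Implicit.
Local Open Scope ring_scope.

Section ReciprocalPowerSums.
Variable F : numFieldType.
Implicit Types rs : seq F.

Definition inv_power_sum rs k := \sum_(w <- rs) w^-1 ^+ k.

Lemma coef_prod_XsubC_low rs : all (fun w => w != 0) rs ->
  let P := \prod_(w <- rs) - w in let s := inv_power_sum rs in
  [/\ (\prod_(w <- rs) ('X - w%:P))`_0 = P,
      (\prod_(w <- rs) ('X - w%:P))`_1 = - P * s 1%N,
      (\prod_(w <- rs) ('X - w%:P))`_2 = P * (s 1%N ^+ 2 - s 2%N) / 2 &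
      (\prod_(w <- rs) ('X - w%:P))`_3
        = - P * (s 1%N ^+ 3 - 3 * s 1%N * s 2%N + 2 * s 3%N) / 6].
Proof.
rewrite /inv_power_sum; elim: rs => [|a rs IH] /=.
  by rewrite !big_nil !coef1 /=; split; ring.
case/andP=> a_neq0 /IH [c0 c1 c2 c3].
rewrite !big_cons mulrBl !(coefB, coefXM, coefCM) /= c0 c1 c2 c3.
by split; field.
Qed.

Lemma sum_inv_cubes_of_roots (c : F) rs : c != 0 -> all (fun w => w != 0) rs ->
  let p := c *: \prod_(w <- rs) ('X - w%:P) in let a k := p`_k / p`_0 in
  \sum_(w <- rs) w^-1 ^+ 3 = 3 * a 1%N * a 2%N - a 1%N ^+ 3 - 3 * a 3%N.
Proof.
move=> c_neq0 rs_neq0 /=; rewrite !coefZ.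
have [-> -> -> ->] := coef_prod_XsubC_low rs_neq0.
have P_neq0 : \prod_(w <- rs) - w != 0.
  by rewrite prodf_seq_neq0; apply/allP => w /(allP rs_neq0); rewrite oppr_eq0.
rewrite /inv_power_sum; field.
by rewrite c_neq0 P_neq0.
Qed.

End ReciprocalPowerSums.

Lemma uniq_roots_scale_prod (R : idomainType) (p : {poly R}) (rs : seq R) :
  all (root p) rs -> uniq_roots rs -> (size p <= (size rs).+1)%N ->
  exists c, p = c *: \prod_(w <- rs) ('X - w%:P).
Proof.
move=> roots_p uniq_rs size_p.
have [q def_p] := uniq_roots_prod_XsubC roots_p uniq_rs.
have [q0 | q_neq0] := eqVneq q 0; first by exists 0; rewrite def_p q0 mul0r scale0r.
have P_neq0 : \prod_(w <- rs) ('X - w%:P) != 0 by rewrite monic_neq0 ?monic_prod_XsubC.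
have size_q : (size q <= 1)%N.
  move: size_p; rewrite def_p size_mul // size_prod_XsubC addnS.
  by rewrite -[X in (_ <= X)%N]add1n leq_add2r.
by exists q`_0; rewrite def_p {1}(size1_polyC size_q) mul_polyC.
Qed.

(* From 2(n+1)t = 2nt + 2t, with x = sin^2 t, cos 2t = 1 - 2x and
   (sin t cos t)^2 = x - x^2. *)
Fixpoint trig_polys (n : nat) : {poly R} * {poly R} :=
  if n is m.+1 then
    let: (a, b) := trig_polys m in
    (a * (1 - 'X *+ 2) - b * ('X - 'X ^+ 2) *+ 2, a *+ 2 + b * (1 - 'X *+ 2))
  else (1, 0).

Definition cos_poly n := (trig_polys n).1.
Definition sin_poly n := (trig_polys n).2.

Lemma cos_polyS n : cos_poly n.+1
  = cos_poly n * (1 - 'X *+ 2) - sin_poly n * ('X - 'X ^+ 2) *+ 2.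
Proof. by rewrite /cos_poly /sin_poly /=; case: (trig_polys n). Qed.

Lemma sin_polyS n : sin_poly n.+1 = cos_poly n *+ 2 + sin_poly n * (1 - 'X *+ 2).
Proof. by rewrite /cos_poly /sin_poly /=; case: (trig_polys n). Qed.

Lemma horner_trig_polys n t :
  (cos_poly n).[sin t ^+ 2] = cos (2 * INR n * t) /\
  sin t * cos t * (sin_poly n).[sin t ^+ 2] = sin (2 * INR n * t).
Proof.
elim: n => [|n [IHc IHs]].
  by rewrite /cos_poly /sin_poly /= !hornerE cos_0 sin_0.
rewrite S_INR Rmult_plus_distr_l Rmult_1_r Rmult_plus_distr_r.
have cos_sqr : cos t ^+ 2 = 1 - sin t ^+ 2.
  by move: (sin2_cos2 t); rewrite /Rsqr !RealsE => <-; ring.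
rewrite cos_plus sin_plus -IHc -IHs sin_2a cos_2a_sin cos_polyS sin_polyS !RealsE /=.
rewrite !(hornerD, hornerN, hornerMn, hornerM, hornerXn, hornerX, hornerC).
split; last by ring.
have -> : forall s c b : R, s * c * b * (2 * s * c) = 2 * s ^+ 2 * b * c ^+ 2 by move=> *; ring.
rewrite cos_sqr; ring.
Qed.

Lemma coef_trig_polys n : let x : R := n%:R in
  [/\ (cos_poly n)`_0 = 1, (cos_poly n)`_1 = -2 * x ^+ 2,
      (cos_poly n)`_2 = 2 / 3 * (x ^+ 4 - x ^+ 2) &
      (cos_poly n)`_3 = -(4 / 45) * x ^+ 6 + 4 / 9 * x ^+ 4 - 16 / 45 * x ^+ 2] /\
  [/\ (sin_poly n)`_0 = 2 * x, (sin_poly n)`_1 = 4 / 3 * (x - x ^+ 3),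
      (sin_poly n)`_2 = 4 / 15 * x ^+ 5 - 4 / 3 * x ^+ 3 + 16 / 15 * x &
      (sin_poly n)`_3 = -(8 / 315) * x ^+ 7 + 16 / 45 * x ^+ 5 - 56 / 45 * x ^+ 3 + 32 / 35 * x].
Proof.
elim: n => [|n [[a0 a1 a2 a3] [b0 b1 b2 b3]]] /=.
  by rewrite /cos_poly /sin_poly /= !coef1 !coef0 /=; split; split; ring.
rewrite cos_polyS sin_polyS !(mulrBr, mulr1, mulrnAr).
rewrite !(coefD, coefB, coefN, coefMn, coefMNn, coefMX, coefMXn) /=.
rewrite a0 a1 a2 a3 b0 b1 b2 b3.
by split; split; field.
Qed.

Lemma size_trig_polys n : (size (cos_poly n) <= n.+1)%N /\ (size (sin_poly n) <= n)%N.
Proof.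
elim: n => [|n [/leq_sizeP ca /leq_sizeP sb]].
  by rewrite /cos_poly /sin_poly /= size_poly1 size_poly0.
rewrite cos_polyS sin_polyS !(mulrBr, mulr1, mulrnAr).
split; apply/leq_sizeP => i hi.
  rewrite !(coefD, coefB, coefN, coefMn, coefMNn, coefMX, coefMXn).
  case: i hi => [|[|i]] //= hi.
  by rewrite subn2 /= !ca ?sb; [ring | lia..].
rewrite !(coefD, coefB, coefN, coefMn, coefMNn, coefMX).
case: i hi => [|i] //= hi.
by rewrite ca ?sb; [ring | lia..].
Qed.

Lemma sin_poly_root n j : (0 < j)%N -> (j < n)%N -> root (sin_poly n) (sin (theta n j) ^+ 2).
Proof.
move=> /ltP j_gt0 /ltP j_lt_n; apply/rootP.
have [_] := horner_trig_polys n (theta n j).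
rewrite sin_2n_theta; last by lia.
move/eqP; rewrite !mulf_eq0.
have /RltP/lt0r_neq0/negbTE -> := sin_theta_gt0 n j j_gt0 j_lt_n.
have /RltP/lt0r_neq0/negbTE -> := cos_theta_gt0 n j j_gt0 j_lt_n.
by move/eqP.
Qed.

Definition sin_theta_sqrs n := [seq sin (theta n j) ^+ 2 | j <- iota 1 n.-1].

Lemma sin_theta_sqrs_neq0 n : all (fun w => w != 0) (sin_theta_sqrs n).
Proof.
apply/allP => _ /mapP[j j_in ->]; move: j_in; rewrite mem_iota => /andP[j_gt0 j_lt_n].
by apply/expf_neq0/lt0r_neq0/RltP/sin_theta_gt0; apply/ltP; lia.
Qed.

Lemma sin_poly_factor n : (0 < n)%N ->
  exists2 c, c != 0 & sin_poly n = c *: \prod_(w <- sin_theta_sqrs n) ('X - w%:P).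
Proof.
move=> n_gt0.
have mem_iota1 j : j \in iota 1 n.-1 -> (0 < j)%N /\ (j < n)%N.
  by rewrite mem_iota => /andP[? ?]; split; lia.
have roots : all (root (sin_poly n)) (sin_theta_sqrs n).
  by apply/allP => _ /mapP[j /mem_iota1[? ?] ->]; apply: sin_poly_root.
have uniq_rs : uniq_roots (sin_theta_sqrs n).
  rewrite uniq_rootsE map_inj_in_uniq ?iota_uniq // => j k.
  move=> /mem_iota1[/ltP ? /ltP ?] /mem_iota1[/ltP ? /ltP ?].
  by rewrite -!RpowE; apply: sin_theta_sqr_inj.
have [c def_S] : exists c, sin_poly n = c *: \prod_(w <- sin_theta_sqrs n) ('X - w%:P).
  apply: uniq_roots_scale_prod roots uniq_rs _.
  by rewrite size_map size_iota prednK //; case: (size_trig_polys n).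
exists c => //.
have n_neq0 : n%:R != 0 :> R by rewrite pnatr_eq0 -lt0n.
apply: contra_neq n_neq0 => c0.
have [_ [S0 _ _ _]] := coef_trig_polys n.
have : 2 * n%:R = 0 :> R by rewrite -S0 def_S c0 scale0r coef0.
lra.
Qed.

Lemma sum_inv_sin_theta_cubes n : (0 < n)%N ->
  \sum_(j <- iota 1 n.-1) (sin (theta n j) ^+ 2)^-1 ^+ 3
  = 8 * (n%:R + 1) * (n%:R - 1) * (8 * n%:R ^+ 4 + 29 * n%:R ^+ 2 + 71) / 945.
Proof.
move=> n_gt0; have [c c_neq0 def_S] := sin_poly_factor n_gt0.
rewrite -(big_map (fun j => sin (theta n j) ^+ 2) predT (fun w => w^-1 ^+ 3)).
rewrite (sum_inv_cubes_of_roots c_neq0 (sin_theta_sqrs_neq0 n)) /= -def_S.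
have [_ [-> -> -> ->]] := coef_trig_polys n.
have n_neq0 : n%:R != 0 :> R by rewrite pnatr_eq0 -lt0n.
by field.
Qed.

Local Open Scope R_scope.

Lemma sum_range_iota m k (f : nat -> R) : sum_range m k f = \sum_(j <- iota m k) f j.
Proof. by elim: k m => [|k IHk] m; rewrite ?big_nil // big_cons -IHk. Qed.

Lemma sum_range_csc_pow6 n : (1 <= n)%coq_nat ->
  sum_range 1 (n - 1) (fun j => csc (theta n j) ^ 6)
  = 8 * (INR n + 1) * (INR n - 1) * (8 * INR n ^ 4 + 29 * INR n ^ 2 + 71) / 945.
Proof.
move=> /leP n_gt0; rewrite sum_range_iota subn1.
under eq_bigr do rewrite /csc RpowE RinvE -[6%N]/(2 * 3)%N exprM exprVn.
by rewrite sum_inv_sin_theta_cubes // !RealsE.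
Qed.

End SinePolynomials.

Theorem mainTheorem18 (n : nat) (hn : (1 <= n)%nat) :
  sum_range 1 (n - 1) (fun j => (csc (INR j * PI / (2 * INR n))) ^ 6)
  = 8 * (INR n + 1) * (INR n - 1) * (8 * INR n ^ 4 + 29 * INR n ^ 2 + 71) / 945.
Proof. exact (SinePolynomials.sum_range_csc_pow6 hn). Qed.
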